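(* Let $K$ be a quasi-arithmetic self-similar compact set of ratio $\rho$ and module $\mu$, and put $T_u=K^{(u)}\setminus K^{(u+1)}$ for $u\ge0$. Let $n\in\mathbf{N}$, $p,q\in\mathbf{Z}$ and $v,w\in\mathbf{Z}_{\ge0}$ with $n/\rho^p\in T_v$ and $n/\rho^q\in T_w$. Then $p\mu-v=q\mu-w$.
   Context: For $A\subset\mathbf{R}$, $A'$ denotes the derived set, $A^{(0)}=A$, $A^{(n+1)}=(A^{(n)})'$. The reverse usual order is $x\preccurlyeq y$ iff $x\ge y$. A self-similar compact set of ratio $\rho>1$ and module $\mu\in\mathbf{N}$ is a compact set $K\subset[0,+\infty)$ with $\rho K^{(\mu)}=K$, well ordered by $\preccurlyeq$, of order type $\omega^\omega+1$. Such $K$ is called quasi-arithmetic if $\rho\ge2$ is a natural number and there is a function $\kappa\colon\mathbf{N}\setminus\rho\mathbf{N}\to\mathbf{Z}_{\ge0}$ with $K\setminus\{0\}=\{m/\rho^k: m\in\mathbf{N},\ \rho\nmid m,\ k\in\mathbf{Z},\ k\ge\kappa(m)\}$. *)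

From Stdlib Require Import Reals Lra Lia ZArith List.
From Stdlib Require Export Rtopology.
Open Scope R_scope.

Definition derived (A : R -> Prop) : R -> Prop :=
  fun x => forall eps : R, 0 < eps ->
    exists y, A y /\ y <> x /\ Rabs (y - x) < eps.

Fixpoint iter_derived (n : nat) (A : R -> Prop) : R -> Prop :=
  match n with
  | O => A
  | S k => derived (iter_derived k A)
  end.

(* Well-ordered by the reverse order x ≼ y iff x >= y:
   every nonempty subset of A has a ≼-least element (= its usual maximum). *)
Definition rev_well_ordered (A : R -> Prop) : Prop :=
  forall B : R -> Prop, (forall x, B x -> A x) -> (exists x, B x) ->
    exists m, B m /\ forall x, B x -> x <= m.

(* A concrete model of the ordinal omega^omega + 1:
   ordinals < omega^omega are Cantor normal forms
   omega^a1 + ... + omega^ak with a1 >= ... >= ak (nonincreasing lists),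
   compared lexicographically (a proper prefix is smaller);
   None stands for omega^omega itself (the top element). *)
Fixpoint nonincr (l : list nat) : Prop :=
  match l with
  | nil => True
  | a :: l' => match l' with
               | nil => True
               | b :: _ => (b <= a)%nat /\ nonincr l'
               end
  end.

Fixpoint lex_lt (l m : list nat) : Prop :=
  match l, m with
  | nil, nil => False
  | nil, _ :: _ => True
  | _ :: _, nil => False
  | a :: l', b :: m' => (a < b)%nat \/ (a = b /\ lex_lt l' m')
  end.

Definition ord_valid (o : option (list nat)) : Prop :=
  match o with None => True | Some l => nonincr l end.

Definition ord_lt (o o' : option (list nat)) : Prop :=
  match o, o' with
  | Some l, Some m => lex_lt l m
  | Some _, None => True
  | None, _ => False
  end.

(* (A, ≼) has order type omega^omega + 1: there is an order isomorphism
   onto the model above, where x ≺ y iff x > y. *)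
Definition order_type_omega_omega_plus_1 (A : R -> Prop) : Prop :=
  exists f : R -> option (list nat),
    (forall x, A x -> ord_valid (f x)) /\
    (forall o, ord_valid o -> exists x, A x /\ f x = o) /\
    (forall x y, A x -> A y -> (ord_lt (f x) (f y) <-> y < x)).

Definition self_similar (K : R -> Prop) (rho : R) (mu : nat) : Prop :=
  1 < rho /\ (1 <= mu)%nat /\
  compact K /\ (forall x, K x -> 0 <= x) /\
  (forall x, K x <-> exists y, iter_derived mu K y /\ x = rho * y) /\
  rev_well_ordered K /\
  order_type_omega_omega_plus_1 K.

Definition quasi_arithmetic (K : R -> Prop) (rho : R) (mu : nat) : Prop :=
  self_similar K rho mu /\
  exists r : nat, (2 <= r)%nat /\ rho = INR r /\
  exists kappa : nat -> nat,
    forall x, (K x /\ x <> 0) <->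
      exists (m : nat) (k : Z),
        (1 <= m)%nat /\ ~ (Nat.divide r m) /\ (Z.of_nat (kappa m) <= k)%Z /\
        x = INR m / powerRZ rho k.

Definition T_level (K : R -> Prop) (u : nat) : R -> Prop :=
  fun x => iter_derived u K x /\ ~ iter_derived (S u) K x.

From Stdlib Require Import Reals ZArith Lra Lia.
Open Scope R_scope.

(* Write x = n / rho^p and y = n / rho^q.  If p <= q then
   x = rho^d * y with d = q - p >= 0.  Self-similarity rho K^(mu) = K says
   that the dilation y |-> rho*y carries K^(mu) onto K; since taking derived
   sets commutes with dilations, it carries K^(u+mu) onto K^(u) for every u,
   hence T_{u+mu} onto T_u.  Iterating, x in T_v forces y in T_{v + d mu}.
   For a closed set the levels T_u are pairwise disjoint, so w = v + d mu,
   which is the identity p mu - v = q mu - w. *)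

Lemma derived_mono (A B : R -> Prop) :
  (forall x, A x -> B x) -> forall x, derived A x -> derived B x.
Proof.
  intros AB x Dx eps Heps.
  destruct (Dx eps Heps) as [y [Ay [Hyx Hclose]]].
  exists y; auto.
Qed.

Lemma iter_derived_mono (A B : R -> Prop) (u : nat) :
  (forall x, A x -> B x) -> forall x, iter_derived u A x -> iter_derived u B x.
Proof.
  induction u as [|u IH]; simpl; intros AB; auto.
  apply derived_mono; auto.
Qed.

Lemma derived_dilate (A : R -> Prop) (c x : R) :
  0 < c -> derived A x -> derived (fun y => A (c * y)) (x / c).
Proof.
  intros Hc Dx eps Heps.
  destruct (Dx (eps * c)) as [y [Ay [Hyx Hclose]]]; [nra|].
  exists (y / c); repeat split.
  - replace (c * (y / c)) with y by (field; lra); exact Ay.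
  - intro E; apply Hyx.
    replace y with (c * (y / c)) by (field; lra); rewrite E; field; lra.
  - replace (y / c - x / c) with ((y - x) * / c) by (field; lra).
    rewrite Rabs_mult, Rabs_inv, (Rabs_right c) by lra.
    apply Rmult_lt_reg_r with c; [lra|].
    replace (Rabs (y - x) * / c * c) with (Rabs (y - x)) by (field; lra).
    exact Hclose.
Qed.

Lemma derived_scale (A : R -> Prop) (c x : R) :
  0 < c -> derived (fun y => A (c * y)) x <-> derived A (c * x).
Proof.
  intros Hc; split; intro D.
  - pose proof (derived_dilate _ (/ c) x (Rinv_0_lt_compat c Hc) D) as D'.
    replace (c * x) with (x / / c) by (field; lra).
    revert D'; apply derived_mono; intros y.
    replace (c * (/ c * y)) with y by (field; lra); auto.
  - pose proof (derived_dilate A c (c * x) Hc D) as D'.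
    replace (c * x / c) with x in D' by (field; lra); exact D'.
Qed.

Lemma iter_derived_scale (A : R -> Prop) (c : R) (u : nat) :
  0 < c -> forall x, iter_derived u (fun y => A (c * y)) x <-> iter_derived u A (c * x).
Proof.
  intros Hc; induction u as [|u IH]; simpl; intro x; [tauto|].
  rewrite <- derived_scale by exact Hc.
  split; apply derived_mono; intro y; apply IH.
Qed.

Lemma iter_derived_add (A : R -> Prop) (a b : nat) :
  iter_derived (b + a) A = iter_derived b (iter_derived a A).
Proof. induction b as [|b IH]; simpl; congruence. Qed.

Lemma closed_derived_incl (A : R -> Prop) :
  closed_set A -> forall x, derived A x -> A x.
Proof.
  intros Hcl x Dx.
  destruct (Classical_Prop.classic (A x)) as [Ax|nAx]; [exact Ax|].
  destruct (Hcl x nAx) as [d Hd].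
  destruct (Dx d (cond_pos d)) as [y [Ay [_ Hclose]]].
  exfalso; exact (Hd y Hclose Ay).
Qed.

Lemma iter_derived_succ_incl (A : R -> Prop) :
  closed_set A -> forall k x, iter_derived (S k) A x -> iter_derived k A x.
Proof.
  intros Hcl k; induction k as [|k IH]; simpl; intro x.
  - apply closed_derived_incl; exact Hcl.
  - apply derived_mono; exact IH.
Qed.

Lemma iter_derived_antitone (A : R -> Prop) :
  closed_set A -> forall k m x, (k <= m)%nat -> iter_derived m A x -> iter_derived k A x.
Proof.
  intros Hcl k m x Hkm; induction Hkm as [|m _ IH]; auto.
  intro Hx; apply IH, iter_derived_succ_incl; assumption.
Qed.

Lemma T_level_unique (A : R -> Prop) (a b : nat) (x : R) :
  closed_set A -> T_level A a x -> T_level A b x -> a = b.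
Proof.
  intros Hcl [Ha nSa] [Hb nSb].
  destruct (Nat.lt_trichotomy a b) as [Hab|[Hab|Hab]]; [exfalso| exact Hab |exfalso].
  - exact (nSa (iter_derived_antitone A Hcl (S a) b x Hab Hb)).
  - exact (nSb (iter_derived_antitone A Hcl (S b) a x Hab Ha)).
Qed.

Section SelfSimilar.

Variables (K : R -> Prop) (rho : R) (mu : nat).
Hypothesis HK : self_similar K rho mu.

Lemma rho_pos : 0 < rho.
Proof. destruct HK as [Hrho _]; lra. Qed.

Lemma self_similar_level : forall y, iter_derived mu K y <-> K (rho * y).
Proof.
  destruct HK as [Hrho [_ [_ [_ [Hss _]]]]]; intro y; split.
  - intro Hy; apply Hss; exists y; auto.
  - intro Hy; destruct (proj1 (Hss _) Hy) as [z [Hz Ez]].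
    replace y with z by (apply Rmult_eq_reg_l with rho; lra); exact Hz.
Qed.

Lemma iter_derived_shift (u : nat) (y : R) :
  iter_derived (u + mu) K y <-> iter_derived u K (rho * y).
Proof.
  rewrite iter_derived_add, <- (iter_derived_scale K rho u rho_pos).
  split; apply iter_derived_mono; intro z; apply self_similar_level.
Qed.

Lemma T_level_shift (u : nat) (y : R) :
  T_level K u (rho * y) -> T_level K (u + mu) y.
Proof.
  intros [Hu nSu]; split.
  - apply iter_derived_shift; exact Hu.
  - intro HS; apply nSu, (iter_derived_shift (S u)); exact HS.
Qed.

Lemma T_level_shift_pow (d u : nat) (y : R) :
  T_level K u (rho ^ d * y) -> T_level K (u + d * mu) y.
Proof.
  revert u y; induction d as [|d IH]; simpl; intros u y Hy.
  - rewrite Nat.add_0_r; rewrite Rmult_1_l in Hy; exact Hy.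
  - replace (rho * rho ^ d * y) with (rho ^ d * (rho * y)) in Hy by ring.
    replace (u + (mu + d * mu))%nat with ((u + d * mu) + mu)%nat by lia.
    apply T_level_shift, IH, Hy.
Qed.

Lemma level_exponent_invariant_le (x : R) (p q : Z) (v w : nat) :
  (p <= q)%Z ->
  T_level K v (x / powerRZ rho p) -> T_level K w (x / powerRZ rho q) ->
  (p * Z.of_nat mu - Z.of_nat v = q * Z.of_nat mu - Z.of_nat w)%Z.
Proof.
  intros Hpq Hv Hw.
  destruct HK as [_ [_ [Hcpt _]]].
  set (d := Z.to_nat (q - p)).
  assert (Hq : q = (p + Z.of_nat d)%Z) by (unfold d; lia).
  assert (Hx : x / powerRZ rho p = rho ^ d * (x / powerRZ rho q)).
  { pose proof rho_pos as Hrho.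
    rewrite Hq, powerRZ_add, <- pow_powerRZ by lra.
    assert (0 < powerRZ rho p) by (apply powerRZ_lt; lra).
    assert (0 < rho ^ d) by (apply pow_lt; lra).
    field; lra. }
  rewrite Hx in Hv.
  pose proof (T_level_unique K _ _ _ (compact_P2 K Hcpt) (T_level_shift_pow d v _ Hv) Hw).
  lia.
Qed.

End SelfSimilar.

Theorem mainTheorem5 (K : R -> Prop) (rho : R) (mu : nat) :
  quasi_arithmetic K rho mu ->
  forall (n : nat) (p q : Z) (v w : nat),
    (1 <= n)%nat ->
    T_level K v (INR n / powerRZ rho p) ->
    T_level K w (INR n / powerRZ rho q) ->
    (p * Z.of_nat mu - Z.of_nat v = q * Z.of_nat mu - Z.of_nat w)%Z.
Proof.
  intros [HK _] n p q v w _ Hv Hw.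
  destruct (Z.le_gt_cases p q) as [Hpq|Hqp].
  - exact (level_exponent_invariant_le K rho mu HK _ p q v w Hpq Hv Hw).
  - symmetry.
    apply (level_exponent_invariant_le K rho mu HK (INR n) q p w v); [lia | exact Hw | exact Hv].
Qed.
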